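(* Let $\Lambda$ be diagonal with entries in $[0,1]$, let $W,\tilde W\in\mathbb{R}^{n\times n}$ be row-stochastic, let $\beta\in\mathbb{R}^n$ with $\beta_i\in(0,1)$ for all $i$, and set $W^{(1)}=(I-[\beta])W$, $W^{(2)}=[\beta]\tilde W$. If $\rho(\Lambda W)<1$ or $\rho(\Lambda\tilde W)<1$, then the FJ-MM system $x(t+1)=\Lambda(W^{(1)}x(t)+W^{(2)}x(t-1))+(I-\Lambda)s$ is exponentially stable, equivalently $\rho(\Lambda(W^{(1)}+W^{(2)}))<1$.
   Context: $[\beta]$ denotes the diagonal matrix with diagonal entries $\beta_1,\dots,\beta_n$. $\rho$ denotes spectral radius. Exponential stability of the FJ-MM system means $\rho(\bar A_d)<1$ for $\bar A_d=\begin{pmatrix}0 & I\\ \Lambda W^{(2)} & \Lambda W^{(1)}\end{pmatrix}$. *)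

From HB Require Import structures.
From mathcomp Require Import all_boot all_order all_algebra.
From mathcomp Require Import complex.
Set Implicit Arguments. Unset Strict Implicit. Unset Printing Implicit Defensive.
Import Order.TTheory GRing.Theory Num.Theory.
Local Open Scope ring_scope.

(* Spectral radius < 1 for a real square matrix A: every (complex) eigenvalue,
   i.e. every complex root of the characteristic polynomial of A, has modulus < 1.
   (rho(A) = max |lambda| over this finite nonempty set when n > 0.) *)
Definition specrad_lt1 (R : rcfType) (n : nat) (A : 'M[R]_n) : Prop :=
  forall z : R[i], root (char_poly (map_mx (fun x => x%:C%C) A)) z -> `|z| < 1.

Definition row_stochastic (R : rcfType) (n : nat) (W : 'M[R]_n) : Prop :=
  (forall i j, 0 <= W i j) /\ (forall i, \sum_(j < n) W i j = 1).

Definition FJMM_matrix (R : rcfType) (n : nat) (Lam W1 W2 : 'M[R]_n) : 'M[R]_(n + n) :=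
  block_mx 0 1%:M (Lam *m W2) (Lam *m W1).

(* Let M := Lam (W1 + W2): a nonnegative matrix whose i-th row sums to lam_i <= 1.
   Both conclusions follow from one fact: no nonzero nonnegative vector a satisfies
   a <= M a entrywise.  Indeed an eigenvector c of M for an eigenvalue z with |z| >= 1
   gives such an a = |c|, and for the augmented matrix an eigenvector (x, z x) gives
   |z|^2 |x| <= Lam W2 |x| + |z| Lam W1 |x|, hence again |x| <= M |x|.
   If such an a existed, the set S where a attains its maximum would satisfy
   lam = 1 on S and be closed under the positive entries of M; since beta_i lies
   strictly between 0 and 1, it is then closed under both W and Wt, so that the rows
   in S of I - Lam W and of I - Lam Wt vanish outside S and sum to zero.  These
   determinants therefore vanish, i.e. 1 is an eigenvalue of both Lam W and Lam Wt,
   contradicting the hypothesis. *)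

From HB Require Import structures.
From mathcomp Require Import all_boot all_order all_algebra.
From mathcomp Require Import complex.
From mathcomp Require Import fingroup perm.
Set Implicit Arguments. Unset Strict Implicit. Unset Printing Implicit Defensive.
Import Order.TTheory GRing.Theory Num.Theory Normc.
Local Open Scope ring_scope.

Lemma perm_exists_notin_setD1 n (s : 'S_n) (S : {set 'I_n}) j0 :
  j0 \in S -> exists2 i, i \in S & s i \notin S :\ j0.
Proof.
move=> j0S; apply/exists_inP; apply: contraT.
rewrite negb_exists_in => /forall_inP sS.
have : (#|[set s x | x in S]| <= #|S :\ j0|)%N.
  by apply/subset_leq_card/subsetP => _ /imsetP [x xS ->]; move/negPn: (sS x xS).
by rewrite card_imset; [rewrite (cardsD1 j0 S) j0S add1n ltnn | exact: perm_inj].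
Qed.

Lemma det_eq0_rows_support_sum0 (R : comNzRingType) n (N : 'M[R]_n)
    (S : {set 'I_n}) :
  S != set0 ->
  (forall i j, i \in S -> j \notin S -> N i j = 0) ->
  (forall i, i \in S -> \sum_(j in S) N i j = 0) -> \det N = 0.
Proof.
move=> /set0Pn [i1 i1S] N_out N_sum.
have [j0 j0S j0_max] := @arg_maxnP _ i1 (mem S) (fun j : 'I_n => val j) i1S.
have {}j0S : j0 \in S := j0S.
(* Adding the columns indexed by S to the last of them, column j0, does not change
   the determinant and makes the rows in S vanish outside S :\ j0; by pigeonhole
   every permutation then meets one of these zeros. *)
pose E : 'M[R]_n := \matrix_(k, j) ((k == j) || ((j == j0) && (k \in S)))%:R.
have detE : \det E = 1.
  rewrite -det_tr det_trig; first by rewrite big1 // => i _; rewrite !mxE eqxx.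
  apply/is_trig_mxP => i j ltij; rewrite !mxE.
  have /negPf -> : j != i by rewrite neq_ltn ltij orbT.
  case: (i =P j0) => [ei0|] //=; case jS: (j \in S) => //.
  by move: (j0_max j jS); rewrite /= -ei0 leqNgt ltij.
have NE_out i j : i \in S -> j \notin S :\ j0 -> (N *m E) i j = 0.
  move=> iS; rewrite in_setD1 negb_and negbK => /orP [/eqP -> | jS].
    rewrite -(N_sum i iS) mxE (bigID (mem S)) /= [X in _ + X]big1 ?addr0.
      by apply: eq_bigr => k kS; rewrite !mxE kS eqxx orbT mulr1.
    move=> k kS; rewrite !mxE (negPf kS) andbF orbF.
    by case: eqP => [ekj | _]; [rewrite ekj j0S in kS | rewrite mulr0].
  rewrite mxE (bigD1 j) //= N_out // mul0r add0r big1 // => k /negPf kj.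
  by rewrite !mxE kj /=; case: eqP jS => [-> | _]; rewrite ?j0S ?mulr0.
suff : \det (N *m E) = 0 by rewrite det_mulmx detE mulr1.
rewrite /determinant big1 // => s _.
have [i iS si] := perm_exists_notin_setD1 s j0S.
by rewrite (bigD1 i) //= NE_out // mul0r mulr0.
Qed.

Lemma det_subr1_eq0_closed_class (R : rcfType) n (lam : 'rV[R]_n)
    (P : 'M[R]_n) (S : {set 'I_n}) :
  row_stochastic P -> S != set0 -> (forall i, i \in S -> lam 0 i = 1) ->
  (forall i j, i \in S -> 0 < P i j -> j \in S) ->
  \det (1%:M - diag_mx lam *m P) = 0.
Proof.
move=> [P_ge0 P_sum] S_neq0 lamS S_closed.
have P_out i j : i \in S -> j \notin S -> P i j = 0.
  move=> iS jS; apply/eqP; rewrite eq_le P_ge0 andbT leNgt.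
  by apply: contra jS; apply: S_closed.
have entry i j : i \in S -> (1%:M - diag_mx lam *m P) i j = (i == j)%:R - P i j.
  by move=> iS; rewrite mul_diag_mx !mxE lamS // mul1r.
apply: (det_eq0_rows_support_sum0 S_neq0) => [i j iS jS | i iS].
  rewrite entry // P_out // subr0.
  by case: eqP => // eij; rewrite -eij iS in jS.
rewrite (eq_bigr _ (fun j _ => entry i j iS)) sumrB.
have -> : \sum_(j in S) P i j = 1.
  rewrite -(P_sum i) [RHS](bigID (mem S)) /= [X in _ + X]big1 ?addr0 //.
  by move=> j jS; apply: P_out.
rewrite (bigD1 i) //= eqxx big1 ?addr0 ?subrr // => j /andP [_ /negPf].
by rewrite eq_sym => ->.
Qed.

Lemma char_poly_trmx (R : comNzRingType) n (A : 'M[R]_n) :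
  char_poly A^T = char_poly A.
Proof.
by rewrite /char_poly /char_poly_mx -det_tr linearB /= tr_scalar_mx map_trmx trmxK.
Qed.

Lemma root_char_poly_eigenvector (F : fieldType) n (A : 'M[F]_n) z :
  root (char_poly A) z -> exists2 c : 'cV_n, c != 0 & A *m c = z *: c.
Proof.
rewrite -char_poly_trmx -eigenvalue_root_char => /eigenvalueP [v Av v_neq0].
exists v^T; first by rewrite trmx_eq0.
by rewrite -[A]trmxK -trmx_mul Av linearZ.
Qed.

Lemma specrad_lt1_det_subr1 (R : rcfType) n (A : 'M[R]_n) :
  specrad_lt1 A -> \det (1%:M - A) != 0.
Proof.
move=> A_lt1; apply/negP => /eqP detA.
have : `|1 : R[i]| < 1.
  apply: A_lt1; rewrite -eigenvalue_root_char.
  apply/eigenvalueP; have /det0P [v v_neq0 Av] : \det (map_mx (real_complex R)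
      (1%:M - A)) == 0 by rewrite det_map_mx detA rmorph0.
  exists v => //; apply/eqP; rewrite scale1r eq_sym -subr_eq0.
  by rewrite -[X in X - _]mulmx1 -mulmxBr -Av map_mxB map_mx1.
by rewrite normr1 ltxx.
Qed.

Lemma argmax_set_closed (R : realDomainType) n (M : 'M[R]_n) (lam a : 'I_n -> R) :
  (forall i j, 0 <= M i j) -> (forall i, \sum_j M i j = lam i) ->
  (forall i, lam i <= 1) -> (forall i, 0 <= a i) -> (exists i, a i != 0) ->
  (forall i, a i <= \sum_j M i j * a j) ->
  exists2 S : {set 'I_n}, S != set0 &
    forall i, i \in S -> lam i = 1 /\ forall j, 0 < M i j -> j \in S.
Proof.
move=> M_ge0 M_sum lam_le1 a_ge0 [i1 ai1_neq0] a_le.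
have [i0 _ a_max] := @arg_maxP _ _ _ i1 xpredT a isT.
set m := a i0.
have m_gt0 : 0 < m.
  by apply: lt_le_trans (a_max i1 isT); rewrite lt_def ai1_neq0 a_ge0.
exists [set i | a i == m]; first by apply/set0Pn; exists i0; rewrite inE.
move=> i; rewrite inE => /eqP ai.
have gap_ge0 j : 0 <= M i j * (m - a j).
  by rewrite mulr_ge0 ?M_ge0 // subr_ge0; exact: a_max.
have gap_sum_ge0 : 0 <= \sum_j M i j * (m - a j) by exact: sumr_ge0.
have gap_sum_le : \sum_j M i j * (m - a j) <= lam i * m - m.
  rewrite (eq_bigr _ (fun j _ => mulrBr (M i j) m (a j))) sumrB -mulr_suml M_sum.
  by rewrite lerD2l lerN2 -ai.
have lam_i : lam i = 1.
  apply/eqP; rewrite eq_le lam_le1 -(ler_pM2r m_gt0) mul1r -subr_ge0.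
  exact: le_trans gap_sum_le.
split=> // j Mij_gt0; rewrite inE; apply/eqP.
have gap_eq0 : \sum_j M i j * (m - a j) = 0.
  apply/le_anti; rewrite gap_sum_ge0 andbT (le_trans gap_sum_le) //.
  by rewrite lam_i mul1r subrr.
have : M i j * (m - a j) = 0 := psumr_eq0P (fun j _ => gap_ge0 j) gap_eq0 isT.
by move/eqP; rewrite mulf_eq0 gt_eqF //= subr_eq0 => /eqP <-.
Qed.

Lemma normr_normc (R : rcfType) (x : R[i]) : `|x| = (normc x)%:C%C.
Proof. by case: x. Qed.

Lemma normc_ge0 (R : rcfType) (x : R[i]) : 0 <= normc x.
Proof. by case: x => a b; exact: sqrtr_ge0. Qed.

Lemma normc_mulmx_le (R : rcfType) m n (M : 'M[R]_(m, n)) (x : 'cV[R[i]]_n) i :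
  (forall i j, 0 <= M i j) ->
  normc ((map_mx (real_complex R) M *m x) i 0) <= \sum_j M i j * normc (x j 0).
Proof.
move=> M_ge0; rewrite -lecR -normr_normc rmorph_sum mxE.
apply: le_trans (ler_norm_sum _ _ _) _; apply: ler_sum => j _.
by rewrite mxE normrM rmorphM /= -normr_normc ger0_norm // lecR.
Qed.

Definition superinvariant_free (R : numDomainType) n (M : 'M[R]_n) :=
  forall a : 'I_n -> R, (forall i, 0 <= a i) ->
    (forall i, a i <= \sum_j M i j * a j) -> forall i, a i = 0.

Lemma normc_ge1 (R : rcfType) (z : R[i]) : ~~ (`|z| < 1) -> 1 <= normc z.
Proof. by rewrite normr_normc (_ : 1 = 1%:C%C) // ltcR -leNgt. Qed.

Lemma col_eq0_normc (R : rcfType) n (c : 'cV[R[i]]_n) :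
  (forall i, normc (c i 0) = 0) -> c = 0.
Proof. by move=> c0; apply/matrixP => i j; rewrite ord1 mxE; apply: eq0_normc. Qed.

Lemma specrad_lt1_superinvariant_free (R : rcfType) n (M : 'M[R]_n) :
  (forall i j, 0 <= M i j) -> superinvariant_free M -> specrad_lt1 M.
Proof.
move=> M_ge0 M_free z /root_char_poly_eigenvector [c c_neq0 Mc].
apply: contraT => /normc_ge1 z_ge1.
suff c_eq0 : c = 0 by rewrite c_eq0 eqxx in c_neq0.
apply: col_eq0_normc.
apply: (M_free (fun i => normc (c i 0))) => [i | i]; first exact: normc_ge0.
apply: le_trans (normc_mulmx_le c i M_ge0).
by rewrite Mc mxE normcM ler_peMl ?normc_ge0.
Qed.

Lemma specrad_lt1_companion (R : rcfType) n (A1 A2 : 'M[R]_n) :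
  (forall i j, 0 <= A1 i j) -> (forall i j, 0 <= A2 i j) ->
  superinvariant_free (A1 + A2) -> specrad_lt1 (block_mx 0 1%:M A2 A1).
Proof.
move=> A1_ge0 A2_ge0 A_free z /root_char_poly_eigenvector [c c_neq0 Ac].
apply: contraT => /normc_ge1 z_ge1; move: Ac.
rewrite -(vsubmxK c) map_block_mx mul_block_col scale_col_mx map_mx0 map_scalar_mx.
rewrite rmorph1 mul0mx mul1mx add0r => /eq_col_mx [y_def x_eq].
set x := usubmx c in y_def x_eq; rewrite y_def -scalemxAr in x_eq.
suff x_eq0 : x = 0.
  by rewrite -(vsubmxK c) -/x y_def x_eq0 scaler0 col_mx0 eqxx in c_neq0.
apply: col_eq0_normc; apply: (A_free (fun i => normc (x i 0))) => [i | i].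
  exact: normc_ge0.
set r := normc z; set a := normc (x i 0).
set B1 := \sum_j A1 i j * normc (x j 0); set B2 := \sum_j A2 i j * normc (x j 0).
have -> : \sum_j (A1 + A2) i j * normc (x j 0) = B1 + B2.
  by rewrite -big_split; apply: eq_bigr => j _; rewrite mxE mulrDl.
have r_gt0 : 0 < r := lt_le_trans ltr01 z_ge1.
have B1_ge0 : 0 <= B1 by apply: sumr_ge0 => j _; rewrite mulr_ge0 ?normc_ge0.
have B2_ge0 : 0 <= B2 by apply: sumr_ge0 => j _; rewrite mulr_ge0 ?normc_ge0.
have rra_le : r * (r * a) <= B2 + r * B1.
  have <- : normc ((z *: (z *: x)) i 0) = r * (r * a) by rewrite 2!mxE !normcM.
  rewrite -x_eq mxE; apply: le_trans (le_normcD _ _) _.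
  rewrite [in X in _ + X <= _]mxE normcM; apply: lerD; first exact: normc_mulmx_le.
  by rewrite ler_wpM2l ?normc_ge0 ?normc_mulmx_le.
have ra_le : r * a <= B1 + B2.
  rewrite -(ler_pM2l r_gt0) mulrDr addrC; apply: le_trans rra_le _.
  by rewrite lerD2r ler_peMl.
by apply: le_trans ra_le; rewrite ler_peMl ?normc_ge0.
Qed.

Section FJMM.

Variables (R : rcfType) (n : nat) (lam beta : 'rV[R]_n) (W Wt : 'M[R]_n).
Hypotheses (lam01 : forall i, 0 <= lam 0 i <= 1) (beta01 : forall i, 0 < beta 0 i < 1).
Hypotheses (W_stoch : row_stochastic W) (Wt_stoch : row_stochastic Wt).

Let Lam := diag_mx lam.
Let W1 := (1%:M - diag_mx beta) *m W.
Let W2 := diag_mx beta *m Wt.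
Let M := Lam *m (W1 + W2).

Let W_ge0 := proj1 W_stoch.
Let Wt_ge0 := proj1 Wt_stoch.
Let lam_ge0 i : 0 <= lam 0 i. Proof. by case/andP: (lam01 i). Qed.
Let beta_gt0 i : 0 < beta 0 i. Proof. by case/andP: (beta01 i). Qed.
Let subr_beta_gt0 i : 0 < 1 - beta 0 i.
Proof. by rewrite subr_gt0; case/andP: (beta01 i). Qed.

Lemma LamW1E i j : (Lam *m W1) i j = lam 0 i * ((1 - beta 0 i) * W i j).
Proof.
by rewrite /Lam /W1 mul_diag_mx mxE mulmxBl mul1mx mul_diag_mx !mxE mulrBl mul1r.
Qed.

Lemma LamW2E i j : (Lam *m W2) i j = lam 0 i * (beta 0 i * Wt i j).
Proof. by rewrite /Lam /W2 mul_diag_mx mxE mul_diag_mx !mxE. Qed.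

Lemma LamW1_ge0 i j : 0 <= (Lam *m W1) i j.
Proof. by rewrite LamW1E !mulr_ge0 ?lam_ge0 ?W_ge0 ?(ltW (subr_beta_gt0 i)). Qed.

Lemma LamW2_ge0 i j : 0 <= (Lam *m W2) i j.
Proof. by rewrite LamW2E !mulr_ge0 ?lam_ge0 ?Wt_ge0 ?(ltW (beta_gt0 i)). Qed.

Lemma fjmm_mxE i j : M i j = (Lam *m W1) i j + (Lam *m W2) i j.
Proof. by rewrite /M mulmxDr mxE. Qed.

Lemma fjmm_rowsum i : \sum_j M i j = lam 0 i.
Proof.
rewrite (eq_bigr _ (fun j _ => fjmm_mxE i j)) big_split /=.
rewrite (eq_bigr _ (fun j _ => LamW1E i j)) (eq_bigr _ (fun j _ => LamW2E i j)).
rewrite -!mulr_sumr (proj2 W_stoch) (proj2 Wt_stoch) !mulr1.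
by rewrite -mulrDr subrK mulr1.
Qed.

Lemma fjmm_gt0 i j : lam 0 i = 1 -> (0 < W i j) || (0 < Wt i j) -> 0 < M i j.
Proof.
move=> lam1 /orP [W_gt0 | Wt_gt0]; rewrite fjmm_mxE LamW1E LamW2E lam1 !mul1r.
  by rewrite -[0](addr0 0) ltr_leD ?mulr_gt0 ?mulr_ge0 ?subr_beta_gt0 ?Wt_ge0
    ?(ltW (beta_gt0 i)).
by rewrite -[0](addr0 0) ler_ltD ?mulr_gt0 ?mulr_ge0 ?beta_gt0 ?W_ge0
  ?(ltW (subr_beta_gt0 i)).
Qed.

Lemma fjmm_superinvariant_free :
  specrad_lt1 (Lam *m W) \/ specrad_lt1 (Lam *m Wt) -> superinvariant_free M.
Proof.
move=> specrad_lt1W a a_ge0 a_le i; apply/eqP/negPn/negP => ai_neq0.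
have M_ge0 j k : 0 <= M j k by rewrite fjmm_mxE addr_ge0 ?LamW1_ge0 ?LamW2_ge0.
have lam_le1 j : lam 0 j <= 1 by case/andP: (lam01 j).
have [S S_neq0 S_closed] := argmax_set_closed M_ge0 fjmm_rowsum lam_le1 a_ge0
  (ex_intro _ i ai_neq0) a_le.
have lamS j : j \in S -> lam 0 j = 1 by case/S_closed.
have M_closed j k : j \in S -> 0 < M j k -> k \in S by move=> /S_closed [_]; apply.
case: specrad_lt1W => /specrad_lt1_det_subr1/negP; apply; apply/eqP.
  apply: (det_subr1_eq0_closed_class W_stoch S_neq0 lamS) => j k jS Wjk.
  by apply: (M_closed j k jS); apply: fjmm_gt0; rewrite ?lamS ?Wjk.
apply: (det_subr1_eq0_closed_class Wt_stoch S_neq0 lamS) => j k jS Wtjk.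
by apply: (M_closed j k jS); apply: fjmm_gt0; rewrite ?lamS ?Wtjk ?orbT.
Qed.

End FJMM.

Theorem corollary1 (R : rcfType) (n : nat) (lam : 'rV[R]_n) (W Wt : 'M[R]_n)
  (beta : 'rV[R]_n) :
  (forall i, 0 <= lam 0 i <= 1) ->
  row_stochastic W -> row_stochastic Wt ->
  (forall i, 0 < beta 0 i < 1) ->
  let Lam := diag_mx lam in
  let W1 := (1%:M - diag_mx beta) *m W in
  let W2 := diag_mx beta *m Wt in
  specrad_lt1 (Lam *m W) \/ specrad_lt1 (Lam *m Wt) ->
  specrad_lt1 (FJMM_matrix Lam W1 W2) /\ specrad_lt1 (Lam *m (W1 + W2)).
Proof.
move=> lam01 W_stoch Wt_stoch beta01 Lam W1 W2 specrad_lt1W.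
have M_free := fjmm_superinvariant_free lam01 beta01 W_stoch Wt_stoch specrad_lt1W.
have LamW1_ge0 := LamW1_ge0 lam01 beta01 W_stoch.
have LamW2_ge0 := LamW2_ge0 lam01 beta01 Wt_stoch.
split.
  by apply: specrad_lt1_companion => //; rewrite -mulmxDr.
apply: specrad_lt1_superinvariant_free M_free => i j.
by rewrite mulmxDr mxE addr_ge0.
Qed.
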